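(* Fix $h_{pd},h_{ps},h_{sd}\in(0,1]$, $\lambda_p,\lambda_s\in(0,1)$, $\psi>0$ and $\mu_p\in[h_{pd},h_{pd}+(1-h_{pd})h_{ps}]$ with $\mu_p>\lambda_p$. Let P2 be: maximize $b\,h_{sd}(1-\lambda_p/\mu_p)$ over $b\in[0,1]$ subject to $\phi_\psi(b)\le 0$; and P4 be: minimize $N_s(b)/\lambda_s$ over $b\in[0,1]$ subject to $\phi_\psi(b)\le 0$ and $b\,h_{sd}(\mu_p-\lambda_p)>\lambda_s\mu_p$. Suppose P2 has an optimal solution $b^*(\mu_p)$ with $b^*(\mu_p)\,h_{sd}(\mu_p-\lambda_p)>\lambda_s\mu_p$. Then $b^*(\mu_p)$ is the (unique) optimal solution of P4; i.e., for fixed $\mu_p$, maximizing the SU throughput and minimizing the average SU packet delay under the PU delay constraint yield the same optimal $b$.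
   Context: Model: PU queue $Q_p$, SU queues $Q_s$, $Q_{sp}$; $h_{pd},h_{sd},h_{ps}$ link success probabilities; $\lambda_p,\lambda_s$ arrival rates; $b\in[0,1]$ the probability the SU serves $Q_s$ when the PU is idle; $\mu_p=h_{pd}+(1-h_{pd})h_{ps}a$ the PU service rate, $a\in[0,1]$. Write $\bar b=1-b$, $\bar\mu_p=1-\mu_p$, $N_p=\frac{\lambda_p-\lambda_p^2}{\mu_p-\lambda_p}$, $$\phi_\psi(b)=\lambda_p(\mu_p-h_{pd})\big(\bar b h_{sd}\bar\mu_p\lambda_p-(\mu_p-h_{pd})\mu_p\lambda_p-h_{pd}\lambda_p+\mu_p^2\big)-\mu_p(\mu_p-\lambda_p)\big(\bar b h_{sd}(\mu_p-\lambda_p)-\lambda_p(\mu_p-h_{pd})\big)(\lambda_p\psi-N_p),$$ $$N_s(b)=\frac{b\,h_{sd}\lambda_p\lambda_s(1-\mu_p)+(\lambda_s-\lambda_s^2)(\mu_p-\lambda_p)\mu_p}{(\mu_p-\lambda_p)\big(b\,h_{sd}(\mu_p-\lambda_p)-\lambda_s\mu_p\big)}.$$ *)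

From Stdlib Require Import Reals Lra.
Open Scope R_scope.

Definition Np (lp mup : R) : R := (lp - lp ^ 2) / (mup - lp).

(* phi_psi(b), with bbar = 1 - b, mubar = 1 - mu_p *)
Definition phi (hpd hsd lp mup psi b : R) : R :=
  lp * (mup - hpd) *
    ((1 - b) * hsd * (1 - mup) * lp - (mup - hpd) * mup * lp - hpd * lp + mup ^ 2)
  - mup * (mup - lp) *
    ((1 - b) * hsd * (mup - lp) - lp * (mup - hpd)) * (lp * psi - Np lp mup).

Definition Ns (hsd lp ls mup b : R) : R :=
  (b * hsd * lp * ls * (1 - mup) + (ls - ls ^ 2) * (mup - lp) * mup) /
  ((mup - lp) * (b * hsd * (mup - lp) - ls * mup)).

Definition P2_feasible (hpd hsd lp mup psi b : R) : Prop :=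
  0 <= b <= 1 /\ phi hpd hsd lp mup psi b <= 0.
Definition P2_obj (hsd lp mup b : R) : R := b * hsd * (1 - lp / mup).
Definition P2_optimal (hpd hsd lp mup psi b : R) : Prop :=
  P2_feasible hpd hsd lp mup psi b /\
  forall b', P2_feasible hpd hsd lp mup psi b' ->
    P2_obj hsd lp mup b' <= P2_obj hsd lp mup b.

Definition P4_feasible (hpd hsd lp ls mup psi b : R) : Prop :=
  0 <= b <= 1 /\ phi hpd hsd lp mup psi b <= 0 /\
  b * hsd * (mup - lp) > ls * mup.
Definition P4_obj (hsd lp ls mup b : R) : R := Ns hsd lp ls mup b / ls.
Definition P4_optimal (hpd hsd lp ls mup psi b : R) : Prop :=
  P4_feasible hpd hsd lp ls mup psi b /\
  forall b', P4_feasible hpd hsd lp ls mup psi b' ->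
    P4_obj hsd lp ls mup b <= P4_obj hsd lp ls mup b'.

(* Both objectives are monotone in b: the P2 objective strictly increases, while
   N_s strictly decreases on the region b h_sd (mu_p - lambda_p) > lambda_s mu_p
   where the SU queue is stable.  Hence the P2 optimum is the largest feasible b,
   and when it also lies in the stability region it is the unique minimiser of
   N_s over the (smaller) feasible set of P4. *)
From Stdlib Require Import Reals Lra.
Open Scope R_scope.

Lemma max_feasible_is_unique_argmin (F G : R -> Prop) (f : R -> R) (x : R) :
  (forall y, G y -> F y) -> (forall y, F y -> y <= x) -> G x ->
  (forall y z, G y -> G z -> y < z -> f z < f y) ->
  (forall y, G y -> f x <= f y) /\
  (forall y, G y -> (forall z, G z -> f y <= f z) -> y = x).
Proof.
  intros GF Fmax Gx f_decr; split.
  - intros y Gy.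
    destruct (Rle_lt_or_eq_dec y x (Fmax y (GF y Gy))) as [yx | ->]; [|lra].
    left; exact (f_decr y x Gy Gx yx).
  - intros y Gy y_min.
    destruct (Rle_lt_or_eq_dec y x (Fmax y (GF y Gy))) as [yx | ->]; [|reflexivity].
    specialize (y_min x Gx); specialize (f_decr y x Gy Gx yx); lra.
Qed.

Lemma Ns_sub (hsd lp ls mup b1 b2 : R) :
  mup - lp <> 0 ->
  b1 * hsd * (mup - lp) - ls * mup <> 0 ->
  b2 * hsd * (mup - lp) - ls * mup <> 0 ->
  Ns hsd lp ls mup b1 - Ns hsd lp ls mup b2 =
  (b2 - b1) * (hsd * lp * ls * (1 - mup) * (ls * mup)
     + (ls - ls ^ 2) * (mup - lp) * mup * (hsd * (mup - lp))) /
  ((mup - lp) * (b1 * hsd * (mup - lp) - ls * mup)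
              * (b2 * hsd * (mup - lp) - ls * mup)).
Proof. intros; unfold Ns; field; auto. Qed.

Lemma Ns_decreasing (hsd lp ls mup b1 b2 : R) :
  0 < hsd -> 0 < lp -> 0 < ls < 1 -> lp < mup <= 1 ->
  b1 * hsd * (mup - lp) > ls * mup ->
  b2 * hsd * (mup - lp) > ls * mup ->
  b1 < b2 -> Ns hsd lp ls mup b2 < Ns hsd lp ls mup b1.
Proof.
  intros hsd_gt0 lp_gt0 ls_bounds mup_bounds stable1 stable2 b12.
  apply Rlt_0_minus; rewrite Ns_sub by lra.
  assert (ls_mup_gt0 : 0 < ls * mup) by (apply Rmult_lt_0_compat; lra).
  assert (ls_var_gt0 : 0 < ls - ls ^ 2) by nra.
  apply Rdiv_lt_0_compat.
  - apply Rmult_lt_0_compat; [lra |].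
    apply Rplus_le_lt_0_compat.
    + repeat apply Rmult_le_pos; lra.
    + repeat apply Rmult_lt_0_compat; lra.
  - repeat apply Rmult_lt_0_compat; lra.
Qed.

Lemma P4_obj_decreasing (hpd hsd lp ls mup psi b1 b2 : R) :
  0 < hsd -> 0 < lp -> 0 < ls < 1 -> lp < mup <= 1 ->
  P4_feasible hpd hsd lp ls mup psi b1 ->
  P4_feasible hpd hsd lp ls mup psi b2 ->
  b1 < b2 -> P4_obj hsd lp ls mup b2 < P4_obj hsd lp ls mup b1.
Proof.
  intros hsd_gt0 lp_gt0 ls_bounds mup_bounds [_ [_ stable1]] [_ [_ stable2]] b12.
  apply Rmult_lt_compat_r; [apply Rinv_0_lt_compat; lra |].
  apply Ns_decreasing; auto.
Qed.

Lemma P2_optimal_ge (hpd hsd lp mup psi bstar b : R) :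
  0 < hsd -> 0 < lp < mup ->
  P2_optimal hpd hsd lp mup psi bstar ->
  P2_feasible hpd hsd lp mup psi b -> b <= bstar.
Proof.
  intros hsd_gt0 lp_mup [_ bstar_max] feas_b.
  assert (slope_gt0 : 0 < hsd * (1 - lp / mup)).
  { apply Rmult_lt_0_compat; [lra |].
    apply Rlt_0_minus, (Rmult_lt_reg_r mup); [lra |].
    unfold Rdiv; rewrite Rmult_assoc, Rinv_l; lra. }
  specialize (bstar_max b feas_b); unfold P2_obj in bstar_max.
  rewrite !Rmult_assoc in bstar_max.
  exact (Rmult_le_reg_r _ _ _ slope_gt0 bstar_max).
Qed.

Lemma P4_feasible_P2_feasible (hpd hsd lp ls mup psi b : R) :
  P4_feasible hpd hsd lp ls mup psi b -> P2_feasible hpd hsd lp mup psi b.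
Proof. intros [b_bounds [phi_le _]]; split; assumption. Qed.

Theorem lemma2 (hpd hps hsd lp ls psi mup bstar : R) :
  0 < hpd <= 1 -> 0 < hps <= 1 -> 0 < hsd <= 1 ->
  0 < lp < 1 -> 0 < ls < 1 -> 0 < psi ->
  hpd <= mup <= hpd + (1 - hpd) * hps -> mup > lp ->
  P2_optimal hpd hsd lp mup psi bstar ->
  bstar * hsd * (mup - lp) > ls * mup ->
  P4_optimal hpd hsd lp ls mup psi bstar /\
  (forall b, P4_optimal hpd hsd lp ls mup psi b -> b = bstar).
Proof.
  intros hpd_bounds hps_bounds hsd_bounds lp_bounds ls_bounds _ mup_bounds lp_mup
    bstar_opt bstar_stable.
  assert (mup_le1 : mup <= 1) by nra.
  assert (bstar_P4 : P4_feasible hpd hsd lp ls mup psi bstar).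
  { destruct bstar_opt as [[b_bounds phi_le] _]; split; [| split]; assumption. }
  destruct (max_feasible_is_unique_argmin
              (P2_feasible hpd hsd lp mup psi) (P4_feasible hpd hsd lp ls mup psi)
              (P4_obj hsd lp ls mup) bstar)
    as [bstar_min unique_min].
  - apply P4_feasible_P2_feasible.
  - intros b; apply (P2_optimal_ge hpd); [lra | lra | exact bstar_opt].
  - exact bstar_P4.
  - intros b1 b2; apply P4_obj_decreasing; lra.
  - split; [split; assumption |].
    intros b [feas_b b_min]; exact (unique_min b feas_b b_min).
Qed.
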